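(* Let $S$ be a numerical semigroup. If $\mathrm{Ap}(S)$ is $\gamma$-rectangular, then $S$ is free. The converse fails: $S=\langle 5,6,9\rangle$ is free but its Apéry set is not $\gamma$-rectangular.
   Context: A numerical semigroup is a submonoid $S$ of $(\mathbb N,+)$ with finite complement in $\mathbb N$; $g_1<\dots<g_\nu$ is its minimal system of generators, $m=g_1$, and for $n\in S$, $\mathrm{Ap}(S,n)=\{s\in S: s-n\notin S\}$, $\mathrm{Ap}(S)=\mathrm{Ap}(S,m)$. A representation of $s\in S$ is an expression $s=\sum_{i=1}^\nu\lambda_ig_i$, $\lambda_i\in\mathbb N$; $\mathrm{ord}(s)$ is the maximum of $\sum\lambda_i$ over all representations; a representation is maximal if $\sum\lambda_i=\mathrm{ord}(s)$. For $i=2,\dots,\nu$, $\gamma_i=\max\{h\in\mathbb N: hg_i\in\mathrm{Ap}(S),\ \mathrm{ord}(hg_i)=h,\ hg_i\text{ has a unique maximal representation}\}$; $\mathrm{Ap}(S)$ is $\gamma$-rectangular if $\mathrm{Ap}(S)=\{\sum_{i=2}^\nu\lambda_ig_i: 0\le\lambda_i\le\gamma_i\}$. For an arbitrary ordering $\mathbf n=(n_1,\dots,n_\nu)$ of the minimal generators, $\phi_i=\min\{h\in\mathbb N: hn_i\in\langle n_1,\dots,n_{i-1}\rangle\}-1$ ($i=2,\dots,\nu$). $S$ is free if there is such an ordering with $\mathrm{Ap}(S,n_1)=\{\sum_{i=2}^\nu\lambda_in_i: 0\le\lambda_i\le\phi_i\}$. *)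

From mathcomp Require Import all_boot.
Set Implicit Arguments. Unset Strict Implicit. Unset Printing Implicit Defensive.

Definition numerical_semigroup (S : nat -> Prop) : Prop :=
  [/\ S 0, (forall a b, S a -> S b -> S (a + b)) &
      exists F, forall n, F <= n -> S n].

Definition min_generator (S : nat -> Prop) (x : nat) : Prop :=
  [/\ S x, 0 < x & ~ (exists a b, [/\ S a, S b, 0 < a, 0 < b & a + b = x])].

(* g = [g_1 < ... < g_nu] is the minimal system of generators of S
   (0-based: g`_0 = m is the multiplicity). *)
Definition min_gens (S : nat -> Prop) (g : seq nat) : Prop :=
  sorted ltn g /\ forall x, x \in g <-> min_generator S x.

(* Ap(S,n) = {s in S : s - n notin S} (s - n < 0 counts as not in S). *)
Definition apery (S : nat -> Prop) (n s : nat) : Prop :=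
  S s /\ (s < n \/ ~ S (s - n)).

Definition is_rep (g : seq nat) (s : nat) (l : seq nat) : Prop :=
  size l = size g /\ \sum_(i < size g) nth 0 l i * nth 0 g i = s.

Definition is_ord (g : seq nat) (s k : nat) : Prop :=
  (exists l, is_rep g s l /\ sumn l = k) /\
  (forall l, is_rep g s l -> sumn l <= k).

Definition maximal_rep (g : seq nat) (s : nat) (l : seq nat) : Prop :=
  is_rep g s l /\ forall l', is_rep g s l' -> sumn l' <= sumn l.

Definition unique_maximal_rep (g : seq nat) (s : nat) : Prop :=
  exists l, maximal_rep g s l /\ forall l', maximal_rep g s l' -> l' = l.

(* the conditions defining gamma_i (i is a 0-based index, 1 <= i < nu) *)
Definition gamma_cond (S : nat -> Prop) (g : seq nat) (i h : nat) : Prop :=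
  [/\ apery S (nth 0 g 0) (h * nth 0 g i),
      is_ord g (h * nth 0 g i) h &
      unique_maximal_rep g (h * nth 0 g i)].

Definition is_gamma (S : nat -> Prop) (g : seq nat) (i k : nat) : Prop :=
  gamma_cond S g i k /\ forall h, gamma_cond S g i h -> h <= k.

Definition gamma_rectangular (S : nat -> Prop) (g : seq nat) : Prop :=
  exists gam : nat -> nat,
    (forall i, 1 <= i < size g -> is_gamma S g i (gam i)) /\
    forall x, apery S (nth 0 g 0) x <->
      exists lam : nat -> nat,
        (forall i, 1 <= i < size g -> lam i <= gam i) /\
        x = \sum_(1 <= i < size g) lam i * nth 0 g i.

Definition in_monoid (t : seq nat) (x : nat) : Prop :=
  exists l : nat -> nat, x = \sum_(j < size t) l j * nth 0 t j.

(* phi_i = k for the ordering n (0-based index i, 1 <= i < nu):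
   phi_i = min{h >= 1 : h n_i in <n_1,...,n_{i-1}>} - 1 *)
Definition is_phi (n : seq nat) (i k : nat) : Prop :=
  in_monoid (take i n) (k.+1 * nth 0 n i) /\
  forall h, 0 < h -> in_monoid (take i n) (h * nth 0 n i) -> k.+1 <= h.

Definition free (S : nat -> Prop) (g : seq nat) : Prop :=
  exists n : seq nat, perm_eq n g /\
    exists phi : nat -> nat,
      (forall i, 1 <= i < size n -> is_phi n i (phi i)) /\
      forall x, apery S (nth 0 n 0) x <->
        exists lam : nat -> nat,
          (forall i, 1 <= i < size n -> lam i <= phi i) /\
          x = \sum_(1 <= i < size n) lam i * nth 0 n i.

Definition S569 (x : nat) : Prop := exists a b c, x = 5 * a + 6 * b + 9 * c.

(* Write m = g_0 and let the box be the set of coefficient vectors v with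
   v_0 = 0 and v_i <= gamma_i.  By hypothesis the box values are exactly
   Ap(S).  The proof proceeds in three stages.
   1. The box map v |-> Σ v_i g_i is injective (box_inj): comparing two box
      vectors with the same value produces representations of the corner
      Σ gamma_i g_i, and a potential function, strictly increased by the
      exchange of Lemma gamma_next, shows the corner itself is the only one.
      Hence box values hit each residue modulo m exactly once.
   2. For a list L of indices containing 0, call L closed when every
      combination of the g_t, t in L, is congruent modulo m to a value of the
      face of the box supported on L.  Then these residues form dZ/mZ for a
      divisor d of m, with d > 1 while L is incomplete; a roots-of-unity
      argument on the generating function of the box yields an index i with
      (gamma_i + 1) g_i in <g_t : t in L> but g_i not, so i can be appended.
   3. Appending indices one at a time orders the generators so that
      phi_i = gamma_i, and the box is then exactly the Apéry set of S with
      respect to the first generator m: S is free. *)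
From mathcomp Require Import all_boot zify.
From mathcomp Require Import ssralg ssrnum poly algC cyclotomic.
From Stdlib Require Import Classical.
Set Implicit Arguments. Unset Strict Implicit. Unset Printing Implicit Defensive.

Definition wsum (n : nat) (w v : nat -> nat) : nat := \sum_(i < n) v i * w i.

Definition unit_vec (j c : nat) : nat -> nat := fun i => if i == j then c else 0.

Section WeightedSums.
Variables (n : nat) (w : nat -> nat).

Lemma eq_wsum u v : (forall i, i < n -> u i = v i) -> wsum n w u = wsum n w v.
Proof. by move=> h; apply: eq_bigr => i _; rewrite h. Qed.

Lemma wsumD u v : wsum n w (fun i => u i + v i) = wsum n w u + wsum n w v.
Proof. by rewrite /wsum -big_split; apply: eq_bigr => i _; rewrite mulnDl. Qed.

Lemma leq_wsum u v : (forall i, i < n -> u i <= v i) -> wsum n w u <= wsum n w v.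
Proof. by move=> h; apply: leq_sum => i _; rewrite leq_mul2r h ?orbT. Qed.

Lemma wsumB u v : (forall i, i < n -> v i <= u i) ->
  wsum n w (fun i => u i - v i) = wsum n w u - wsum n w v.
Proof.
move=> h; apply/eqP; rewrite -(eqn_add2r (wsum n w v)) -wsumD subnK ?leq_wsum //.
by apply/eqP/eq_wsum => i hi; rewrite subnK // h.
Qed.

Lemma wsum_ge v i : i < n -> v i * w i <= wsum n w v.
Proof. by move=> hi; rewrite /wsum (bigD1 (Ordinal hi)) //= leq_addr. Qed.

Lemma wsum_unit j c : j < n -> wsum n w (unit_vec j c) = c * w j.
Proof.
move=> hj; rewrite /wsum (bigD1 (Ordinal hj)) //= big1 ?addn0 /unit_vec ?eqxx //.
by move=> i; rewrite -val_eqE /= => /negPf ->.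
Qed.

Lemma wsum_eq0 v : (forall i, i < n -> v i = 0) -> wsum n w v = 0.
Proof. by move=> h; rewrite /wsum big1 // => i _; rewrite h. Qed.

Lemma wsum0 : wsum n w (fun _ => 0) = 0.
Proof. exact: wsum_eq0. Qed.

End WeightedSums.

(* A "variance" inequality: if the vector rho has length c and weighted sum
   c * b but gives positive mass to some weight different from b, then its
   sum of squared weights exceeds c * b^2 (since
   Σ rho_i w_i^2 + c b^2 = 2 b Σ rho_i w_i + Σ rho_i (w_i - b)^2). *)
Lemma wsum_sq_gt n w rho b c :
  wsum n (fun _ => 1) rho = c -> wsum n w rho = c * b ->
  (exists2 i, i < n & 0 < rho i /\ w i != b) ->
  c * b ^ 2 < wsum n (fun i => w i ^ 2) rho.
Proof.
move=> hlen hval [i hi [hri hwi]].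
pose d i := (w i - b) + (b - w i).
have sq_expand k : k < n ->
    rho k * w k ^ 2 + rho k * 1 * b ^ 2 = 2 * b * (rho k * w k) + rho k * d k ^ 2.
  move=> _; rewrite /d; case: (leqP (w k) b) => h.
  - have [e ->] : exists e, b = w k + e by exists (b - w k); lia.
    have -> : w k - (w k + e) = 0 by lia.
    rewrite add0n addKn !expnS !expn0 !muln1; nia.
  - have [e ->] : exists e, w k = b + e by exists (w k - b); lia.
    have -> : b - (b + e) = 0 by lia.
    rewrite addn0 addKn !expnS !expn0 !muln1; nia.
have identity : wsum n (fun i => w i ^ 2) rho + c * b ^ 2 =
    2 * b * (c * b) + wsum n (fun i => d i ^ 2) rho.
  rewrite -hval -hlen /wsum !big_distrl big_distrr -!big_split /=.
  by apply: eq_bigr => k _; rewrite sq_expand // mulnAC.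
have pos : 0 < wsum n (fun i => d i ^ 2) rho.
  apply: leq_trans (wsum_ge (fun i => d i ^ 2) rho hi); rewrite muln_gt0 hri expn_gt0 /d.
  by move: hwi => /eqP; lia.
move: identity pos; rewrite !expnS !expn0 !muln1; nia.
Qed.

Notation comb g := (wsum (size g) (nth 0 g)).
Notation vlen g := (wsum (size g) (fun _ => 1)).

Lemma vlen_ge (g : seq nat) v i : i < size g -> v i <= vlen g v.
Proof. by move=> hi; have := wsum_ge (fun _ => 1) v hi; rewrite muln1. Qed.

Lemma vlen_unit (g : seq nat) j c : j < size g -> vlen g (unit_vec j c) = c.
Proof. by move=> hj; rewrite wsum_unit // muln1. Qed.

Lemma vlen_eq0 (g : seq nat) v : vlen g v = 0 -> forall i, i < size g -> v i = 0.
Proof. by move=> h i hi; have := vlen_ge v hi; rewrite h leqn0 => /eqP. Qed.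

Lemma vec_rep (g : seq nat) v :
  is_rep g (comb g v) (mkseq v (size g)) /\ sumn (mkseq v (size g)) = vlen g v.
Proof.
split; first split; first by rewrite size_mkseq.
  by apply: eq_wsum => i hi; rewrite nth_mkseq.
rewrite sumnE (big_nth 0) big_mkord size_mkseq.
by apply: eq_bigr => i _; rewrite nth_mkseq // muln1.
Qed.

Lemma rep_vec (g : seq nat) s l :
  is_rep g s l -> comb g (nth 0 l) = s /\ sumn l = vlen g (nth 0 l).
Proof.
case=> hs hv; split=> //; rewrite sumnE (big_nth 0) big_mkord hs.
by apply: eq_bigr => i _; rewrite muln1.
Qed.

Definition supported (g L : seq nat) (v : nat -> nat) : Prop :=
  forall t, t < size g -> t \notin L -> v t = 0.

Section RootsOfUnity.
Import GRing.Theory Num.Theory.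
Local Open Scope ring_scope.

(* If the values Σ f_i G_i of the box {f : f_i <= c_i} hit every residue
   modulo m exactly once, then every divisor d > 1 of m divides some
   (c_i + 1) G_i but not G_i: evaluating the generating function
   Π_i (1 + X^{G_i} + ... + X^{c_i G_i}) = Σ_{r < m} X^r  (mod X^m - 1)
   at a primitive d-th root of unity z gives 0, so some factor
   Σ_{j <= c_i} (z^{G_i})^j vanishes, forcing z^{G_i} <> 1 = z^{(c_i+1) G_i}. *)
Lemma box_residues_divisor (nu N m d : nat) (G c : nat -> nat) :
  (1 < d)%N -> (d %| m)%N -> (0 < m)%N -> (forall i, c i < N)%N ->
  (forall r : 'I_m, exists f : {ffun 'I_nu -> 'I_N},
      f \in family (fun i : 'I_nu => [pred j : 'I_N | (j <= c i)%N]) /\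
      ((\sum_(i < nu) f i * G i) %% m = r)%N) ->
  (forall f1 f2 : {ffun 'I_nu -> 'I_N},
      f1 \in family (fun i : 'I_nu => [pred j : 'I_N | (j <= c i)%N]) ->
      f2 \in family (fun i : 'I_nu => [pred j : 'I_N | (j <= c i)%N]) ->
      ((\sum_(i < nu) f1 i * G i) %% m = (\sum_(i < nu) f2 i * G i) %% m)%N ->
      f1 = f2) ->
  exists i : 'I_nu, ~~ (d %| G i)%N /\ (d %| (c i).+1 * G i)%N.
Proof.
move=> d1 dm m0 cN hex huniq.
have [z hz] := C_prim_root_exists (ltnW d1).
have zm : z ^+ m = 1.
  by case/dvdnP: dm => q ->; rewrite mulnC exprM (prim_expr_order hz) expr1n.
have zmod x : z ^+ x = z ^+ (x %% m)%N.
  by rewrite {1}(divn_eq x m) exprD mulnC exprM zm expr1n mul1r.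
have z1 : z != 1.
  apply/eqP => e; have := prim_order_dvd hz 1; rewrite expr1 e eqxx.
  by rewrite dvdn1 => /eqP; lia.
set Q := fun i : 'I_nu => [pred j : 'I_N | (j <= c i)%N].
set s := fun f : {ffun 'I_nu -> 'I_N} => (\sum_(i < nu) f i * G i)%N.
have sum0 : \sum_(r < m) z ^+ r = 0.
  have : (z - 1) * \sum_(r < m) z ^+ r = 0 by rewrite -subrX1 zm subrr.
  by move/eqP; rewrite mulf_eq0 subr_eq0 (negPf z1) /= => /eqP.
have generating : \prod_(i < nu) \sum_(j : 'I_N | Q i j) z ^+ (j * G i) = 0.
  rewrite bigA_distr_big_dep /=.
  rewrite (eq_bigr (fun f => z ^+ (s f %% m)%N)); last first.
    by move=> f _; rewrite prodrXr -zmod.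
  rewrite (partition_big (fun f => Ordinal (ltn_pmod (s f) m0)) xpredT) //=.
  rewrite -[RHS]sum0; apply: eq_bigr => r _.
  have [f0 [hf0 hr0]] := hex r.
  rewrite (big_pred1 f0); first by congr (z ^+ _); rewrite hr0.
  move=> f; rewrite /= -val_eqE /=; apply/idP/idP.
    case/andP=> hf /eqP hfr; apply/eqP; apply: huniq => //.
    by rewrite /s in hfr; rewrite hfr hr0.
  by move/eqP ->; rewrite hf0 hr0 eqxx.
move/eqP: generating => /prodf_eq0 [i _].
set x := z ^+ G i.
have -> : \sum_(j : 'I_N | Q i j) z ^+ (j * G i) = \sum_(j < (c i).+1) x ^+ j.
  rewrite (big_ord_widen _ (fun j => x ^+ j) (cN i)).
  by apply: eq_bigr => j _; rewrite /x -exprM mulnC.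
move=> /eqP hf; exists i.
have x1 : x != 1.
  apply/eqP => ex; move: hf; rewrite ex (eq_bigr (fun _ => 1)) => [|j _].
    by rewrite sumr_const card_ord => /eqP; rewrite pnatr_eq0.
  by rewrite expr1n.
split; first by rewrite (prim_order_dvd hz).
by rewrite (prim_order_dvd hz) mulnC exprM -/x -subr_eq0 subrX1 hf mulr0.
Qed.

End RootsOfUnity.

Lemma in_monoid_supported (g L : seq nat) x : (forall t, t \in L -> t < size g) ->
  in_monoid (map (nth 0 g) L) x <-> exists c, supported g L c /\ x = comb g c.
Proof.
elim: L x => [|a L IH] x hL.
  split; first by case=> l ->; exists (fun _ => 0); rewrite big_ord0 wsum0.
  by case=> c [hc ->]; exists (fun _ => 0); rewrite big_ord0 wsum_eq0 // => i hi; exact: hc.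
have hL' t : t \in L -> t < size g by move=> tL; apply: hL; rewrite inE tL orbT.
have ha : a < size g by apply: hL; rewrite mem_head.
split.
  case=> l; rewrite /= big_ord_recl /= => ->.
  have [c [hc ->]] := (IH _ hL').1 (ex_intro _ (fun j => l j.+1) (erefl _)).
  exists (fun t => c t + unit_vec a (l 0) t); split.
    move=> t ht; rewrite inE negb_or => /andP[ta tL]; rewrite hc // /unit_vec.
    by rewrite (negPf ta).
  by rewrite wsumD wsum_unit // addnC.
case=> c [hc ->].
pose c' t := if t == a then 0 else c t.
have hc' : supported g L c'.
  move=> t ht tL; rewrite /c'; case: eqP => // /eqP ta.
  by apply: hc => //; rewrite inE negb_or ta tL.
have [l hl] := (IH (comb g c') hL').2 (ex_intro _ c' (conj hc' (erefl _))).
exists (fun j => if j is j'.+1 then l j' else c a).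
rewrite /= big_ord_recl /= -hl -(wsum_unit (nth 0 g) (c a) ha) addnC -wsumD.
by apply: eq_wsum => t ht; rewrite /c' /unit_vec; case: eqP => [->|]; lia.
Qed.

Lemma nth_notin_take (s : seq nat) p : uniq s -> p < size s -> nth 0 s p \notin take p s.
Proof.
move=> hu hp; apply/negP => hin.
have := index_uniq 0 hp hu; set x := nth 0 s p => e.
have e2 : index x s = index x (take p s).
  by rewrite -{1}[s](cat_take_drop p s) index_cat hin.
by move: hin; rewrite -index_mem -e2 e size_take hp ltnn.
Qed.

Lemma least_witness (P : nat -> Prop) :
  (exists n, P n) -> exists n, P n /\ forall k, k < n -> ~ P k.
Proof.
case=> n; elim/ltn_ind: n => n IH Pn.
case: (classic (exists2 k, k < n & P k)) => [[k hk Pk]|hn]; first exact: IH Pk.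
by exists n; split=> // k hk Pk; apply: hn; exists k.
Qed.

Section NumericalSemigroup.
Variables (S : nat -> Prop) (g : seq nat).
Hypotheses (hS : numerical_semigroup S) (hg : min_gens S g).

Local Notation G i := (nth 0 g i).
Local Notation m := (nth 0 g 0).
Local Notation Ap := (apery S (nth 0 g 0)).

Lemma semigroup0 : S 0. Proof. by case: hS. Qed.

Lemma semigroupD a b : S a -> S b -> S (a + b).
Proof. by case: hS => _ h _; apply: h. Qed.

Lemma gen_min i : i < size g -> min_generator S (G i).
Proof. by move=> hi; case: hg => _ h; apply/h; apply: mem_nth. Qed.

Lemma gen_in_S i : i < size g -> S (G i). Proof. by case/gen_min. Qed.

Lemma gen_pos i : i < size g -> 0 < G i. Proof. by case/gen_min. Qed.

Lemma gen_lt i j : i < j -> j < size g -> G i < G j.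
Proof.
move=> hij hj; case: hg => sorted_g _.
by apply: (sorted_ltn_nth ltn_trans 0 sorted_g); rewrite // inE; lia.
Qed.

Lemma gen_inj i j : i < size g -> j < size g -> G i = G j -> i = j.
Proof.
move=> hi hj e; case: (ltngtP i j) => // h.
- by have := gen_lt h hj; rewrite e ltnn.
- by have := gen_lt h hi; rewrite e ltnn.
Qed.

(* Decomposing a positive element of S as long as possible ends in a minimal
   generator; hence g is not empty. *)
Lemma gens_nonempty : 0 < size g.
Proof.
have [F hF] : exists F, forall n, F <= n -> S n by case: hS.
suff [x xg] : exists x, x \in g by case: (g) xg.
have : S F.+1 by exact: hF.
elim/ltn_ind: F.+1 (ltn0Sn F) => x IH x0 Sx.
case: (classic (exists a b, [/\ S a, S b, 0 < a, 0 < b & a + b = x])).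
  by case=> a [b [Sa Sb a0 b0 e]]; apply: (IH a) => //; lia.
by move=> hmin; exists x; case: hg => _ ->.
Qed.

Lemma S_comb v : S (comb g v).
Proof.
rewrite /wsum; elim/big_ind: _ => [|x y|i _]; [exact: semigroup0|exact: semigroupD|].
elim: (v i) => [|k IH]; first by rewrite mul0n; exact: semigroup0.
by rewrite mulSn; apply: semigroupD => //; apply: gen_in_S.
Qed.

Lemma coord_le_comb v i : i < size g -> v i <= comb g v.
Proof.
move=> hi; apply: leq_trans (wsum_ge _ v hi).
by rewrite leq_pmulr // gen_pos.
Qed.

Lemma comb_eq0 v : comb g v = 0 -> forall i, i < size g -> v i = 0.
Proof. by move=> h i hi; have := coord_le_comb v hi; rewrite h leqn0 => /eqP. Qed.

Lemma comb_gen j w : j < size g -> comb g w = G j ->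
  forall t, t < size g -> w t = unit_vec j 1 t.
Proof.
move=> hj hw.
case: (classic (exists2 t, t < size g & 0 < w t)) => [[t ht hwt]|hn]; last first.
  have : comb g w = 0.
    by apply: wsum_eq0 => i hi; apply: NNPP => hh; apply: hn; exists i => //; lia.
  by rewrite hw => e; have := gen_pos hj; lia.
have le1 i : i < size g -> unit_vec t 1 i <= w i by rewrite /unit_vec; case: eqP => // ->.
set rest := comb g (fun i => w i - unit_vec t 1 i).
have e : G j = G t + rest.
  rewrite /rest wsumB // wsum_unit // mul1n hw subnKC //.
  by rewrite -hw; apply: leq_trans (wsum_ge _ w ht); rewrite leq_pmull.
have [_ _ hmin] := gen_min hj.
have rest0 : rest = 0.
  apply: NNPP => hne; apply: hmin; exists (G t), rest.
  by split; [exact: gen_in_S | exact: S_comb | exact: gen_pos | lia | lia].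
have tj : t = j by apply: gen_inj; lia.
move: tj rest0 => <- /comb_eq0 h0 k hk.
by have := h0 k hk; have := le1 k hk; rewrite /unit_vec; case: eqP => [->|_]; lia.
Qed.

Let hg0 : 0 < size g := gens_nonempty.

Lemma mult_pos : 0 < m. Proof. exact: gen_pos. Qed.

Lemma S_mult a : S (a * m).
Proof.
elim: a => [|a IH]; first by rewrite mul0n; exact: semigroup0.
by rewrite mulSn; apply: semigroupD => //; exact: gen_in_S.
Qed.

Lemma apery_summand x a b : Ap x -> x = a + b -> S a -> S b -> Ap a.
Proof.
move=> [Sx hx] e Sa Sb; split=> //.
case: (ltnP a m) => [|ham]; [by left | right=> Sam].
case: hx => [|]; first lia.
apply; have -> : x - m = (a - m) + b by lia.
exact: semigroupD.
Qed.

Lemma apery_mod_inj x y : Ap x -> Ap y -> x = y %[mod m] -> x = y.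
Proof.
wlog: x y / x <= y => [W ax ay e|hxy [Sx _] [Sy hy] e].
  by case: (leqP x y) => h; [exact: W | symmetry; apply: W => //; exact: ltnW].
have /dvdnP [q eq] : m %| y - x by rewrite -eqn_mod_dvd // e.
case: q eq => [|q] eq; first lia.
case: hy => [h|]; first by have := mult_pos; nia.
case; have -> : y - m = x + q * m by nia.
by apply: semigroupD => //; exact: S_mult.
Qed.

Lemma apery_decomp y : S y -> exists a w, Ap w /\ y = a * m + w.
Proof.
elim/ltn_ind: y => y IH Sy.
case: (ltnP y m) => hy; first by exists 0, y; split=> //; split=> //; left.
case: (classic (S (y - m))) => h; last by exists 0, y; split=> //; split=> //; right.
have [a [w [aw e]]] := IH (y - m) ltac:(have := mult_pos; lia) h.
by exists a.+1, w; split=> //; lia.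
Qed.

Lemma apery_residue r : exists w, Ap w /\ w = r %[mod m].
Proof.
have [F hF] : exists F, forall n, F <= n -> S n by case: hS.
have [a [w [aw e]]] := apery_decomp (hF (r + F * m) ltac:(have := mult_pos; nia)).
exists w; split=> //.
have : F * m + r = w %[mod m] by rewrite addnC e modnMDl.
by rewrite modnMDl.
Qed.

Lemma gen_apery j : 1 <= j < size g -> Ap (G j).
Proof.
move=> /andP[hj1 hj2]; split; first exact: gen_in_S.
right => hs; have [_ _ hmin] := gen_min hj2; apply: hmin.
have := gen_lt hj1 hj2; have := mult_pos.
by exists m, (G j - m); split; [exact: gen_in_S | exact: hs | done | lia | lia].
Qed.

End NumericalSemigroup.

Section GammaRectangular.
Variables (S : nat -> Prop) (g : seq nat) (gam : nat -> nat).
Hypotheses (hS : numerical_semigroup S) (hg : min_gens S g).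
Hypothesis hgam : forall i, 1 <= i < size g -> is_gamma S g i (gam i).
Hypothesis hAp : forall x, apery S (nth 0 g 0) x <->
  exists lam : nat -> nat,
    (forall i, 1 <= i < size g -> lam i <= gam i) /\
    x = \sum_(1 <= i < size g) lam i * nth 0 g i.

Local Notation nu := (size g).
Local Notation G i := (nth 0 g i).
Local Notation m := (nth 0 g 0).
Local Notation Ap := (apery S (nth 0 g 0)).

Let hg0 : 0 < nu := gens_nonempty hS hg.

Definition bound i := if i == 0 then 0 else gam i.

Definition in_box v := forall i, i < nu -> v i <= bound i.

Lemma comb_split v : comb g v = v 0 * m + \sum_(1 <= i < nu) v i * G i.
Proof. by rewrite /wsum -(big_mkord xpredT (fun i => v i * G i)) big_ltn. Qed.

Lemma box_apery v : in_box v -> Ap (comb g v).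
Proof.
move=> hv; apply/hAp; exists v; split.
  by move=> i /andP[h1 h2]; have := hv i h2; rewrite /bound; case: eqP => //; lia.
by have := hv 0 hg0; rewrite /bound eqxx leqn0 comb_split => /eqP ->.
Qed.

Lemma apery_box x : Ap x -> exists v, in_box v /\ x = comb g v.
Proof.
case/hAp=> lam [hl ->]; exists (fun i => if i == 0 then 0 else lam i); split.
  by move=> i hi; rewrite /bound; case: eqP => // /eqP ne; apply: hl; lia.
rewrite comb_split mul0n add0n; apply: eq_big_nat => i /andP[h1 _].
by case: eqP => //; lia.
Qed.

Lemma gamma_len i v : 1 <= i < nu -> comb g v = gam i * G i -> vlen g v <= gam i.
Proof.
move=> hi hv; case: (hgam hi) => -[_ [_ hord] _] _.
have [hr hs] := vec_rep g v; rewrite -hs; apply: hord; by rewrite -hv.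
Qed.

Lemma gamma_unique i v : 1 <= i < nu -> comb g v = gam i * G i ->
  vlen g v = gam i -> forall t, t < nu -> v t = unit_vec i (gam i) t.
Proof.
move=> hi hv hl; case: (hgam hi) => -[_ [_ hord] [l0 [_ hu]]] _.
have hi' : i < nu by case/andP: hi.
have maximal u : comb g u = gam i * G i -> vlen g u = gam i ->
    mkseq u nu = l0.
  move=> hu1 hu2; apply: hu; have [hr hs] := vec_rep g u; split; first by rewrite -hu1.
  by move=> l' /hord; rewrite hs hu2.
have e := etrans (maximal _ hv hl)
  (esym (maximal _ (wsum_unit (nth 0 g) (gam i) hi') (vlen_unit (gam i) hi'))).
by move=> t ht; have := congr1 (nth 0 ^~ t) e; rewrite !nth_mkseq.
Qed.

(* By maximality of gamma_i, if (gamma_i + 1) g_i is in Ap(S) then it has a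
   representation of length at least gamma_i + 1 other than (gamma_i+1) e_i. *)
Lemma gamma_succ_rep i : 1 <= i < nu -> Ap ((gam i).+1 * G i) ->
  exists rho, [/\ comb g rho = (gam i).+1 * G i, (gam i).+1 <= vlen g rho &
    (gam i).+1 < vlen g rho \/
    exists2 t, t < nu & rho t <> unit_vec i (gam i).+1 t].
Proof.
move=> hi hap; have hi' : i < nu by case/andP: hi.
case: (hgam hi) => _ hmax.
set s := (gam i).+1 * G i; set l0 := mkseq (unit_vec i (gam i).+1) nu.
have [hr0 hl0] := vec_rep g (unit_vec i (gam i).+1).
rewrite wsum_unit // vlen_unit // in hr0 hl0.
(* either ord(s) > gamma_i + 1 ... *)
case: (classic (forall l, is_rep g s l -> sumn l <= (gam i).+1)) => hall; last first.
  have [l hl] : exists l, ~ (is_rep g s l -> sumn l <= (gam i).+1).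
    exact: not_all_ex_not.
  have [hr hn] := imply_to_and _ _ hl.
  have [hv hs] := rep_vec hr.
  by exists (nth 0 l); rewrite -hs; split; [exact: hv | lia | left; lia].
(* ... or l0 is maximal but not the unique maximal representation *)
have hmax0 : maximal_rep g s l0 by split=> //; rewrite hl0.
have not_unique : ~ unique_maximal_rep g s.
  move=> hu; have : gamma_cond S g i (gam i).+1.
    by split=> //; split=> //; exists l0; split=> //; case: hmax0.
  by move/hmax; rewrite ltnn.
have [l' hl'] : exists l', ~ (maximal_rep g s l' -> l' = l0).
  by apply: not_all_ex_not => h; apply: not_unique; exists l0.
have [[hr hm] hne] := imply_to_and _ _ hl'.
have [hv hs] := rep_vec hr.
have := hm _ hr0; rewrite hl0 => hle.
exists (nth 0 l'); split=> //; first by rewrite -hs.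
right; apply: NNPP => hn; apply: hne.
apply: (@eq_from_nth _ 0); first by rewrite size_mkseq; case: hr.
move=> t; case: hr => -> _ ht; rewrite nth_mkseq //.
by apply: NNPP => h; apply: hn; exists t.
Qed.

(* ... and, by uniqueness of the maximal representation of gamma_i g_i, that
   representation does not use g_i at all. *)
Lemma gamma_next i : 1 <= i < nu -> Ap ((gam i).+1 * G i) ->
  exists rho, [/\ comb g rho = (gam i).+1 * G i, (gam i).+1 <= vlen g rho & rho i = 0].
Proof.
move=> hi hap; have hi' : i < nu by case/andP: hi.
have [rho [h1 h2 h3]] := gamma_succ_rep hi hap.
exists rho; split=> //; case: (posnP (rho i)) => // hpos.
pose r' t := rho t - unit_vec i 1 t.
have hle t : t < nu -> unit_vec i 1 t <= rho t by rewrite /unit_vec; case: eqP => // ->.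
have hv' : comb g r' = gam i * G i by rewrite wsumB // h1 wsum_unit // mulSn; lia.
have hl' : vlen g r' = gam i.
  by have := gamma_len hi hv'; rewrite /r' wsumB // vlen_unit //; lia.
have hu := gamma_unique hi hv' hl'.
case: h3 => [|[t ht hne]]; first by move: hl'; rewrite /r' wsumB // vlen_unit //; lia.
by exfalso; apply: hne; have := hu t ht; rewrite /r' /unit_vec; case: eqP => [->|_]; lia.
Qed.

(* The injectivity of the box is proved with a potential function: the
   corner [top] of the box has, among all its representations, the corner
   itself as the one of largest potential, and exchanging coordinates of two
   box vectors with the same value produces representations of [top]. *)
Definition top := comb g bound.

Lemma top_apery : Ap top. Proof. exact: box_apery. Qed.

(* A weight larger than any (gamma_i + 1) g_i^2 makes the potential favour
   long representations first, and then large sums of squared generators. *)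
Definition big_weight := (\sum_(i < nu) (gam i).+1 * G i ^ 2).+1.
Definition potential := wsum nu (fun i => big_weight + G i ^ 2).

Lemma potential_split v :
  potential v = big_weight * vlen g v + wsum nu (fun i => G i ^ 2) v.
Proof.
rewrite /potential /wsum big_distrr -big_split /=.
by apply: eq_bigr => i _; rewrite mulnDr !mulnA muln1 mulnC.
Qed.

Lemma exchange_gain t rho : 1 <= t < nu ->
  comb g rho = (gam t).+1 * G t -> (gam t).+1 <= vlen g rho -> rho t = 0 ->
  (gam t).+1 * (big_weight + G t ^ 2) < potential rho.
Proof.
move=> ht hr1 hr2 hr3; have ht' : t < nu by case/andP: ht.
set c := (gam t).+1 in hr1 hr2 *.
have hM : c * G t ^ 2 < big_weight.
  by rewrite /big_weight ltnS (bigD1 (Ordinal ht')) //= leq_addr.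
rewrite potential_split.
case: (ltnP c (vlen g rho)) => hl.
  have : big_weight * c.+1 <= big_weight * vlen g rho by rewrite leq_mul2l hl orbT.
  nia.
have hlc : vlen g rho = c by lia.
have [i hi hri] : exists2 i, i < nu & 0 < rho i.
  apply: NNPP => hn; have : vlen g rho = 0.
    by apply: wsum_eq0 => i hi; apply: NNPP => hh; apply: hn; exists i; lia.
  by rewrite hlc.
have hit : G i != G t.
  by apply/eqP => /(gen_inj hg hi ht') eit; move: hri; rewrite eit hr3.
rewrite hlc mulnDr mulnC ltn_add2l.
by apply: (wsum_sq_gt hlc hr1); exists i.
Qed.

Lemma exchange_step v : comb g v = top -> (exists2 t, t < nu & bound t < v t) ->
  exists v', comb g v' = top /\ potential v < potential v'.
Proof.
move=> hv [t ht hlt].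
have t0 : t != 0.
  apply/eqP => et; subst t; have [_ hW] := top_apery.
  have le1 i : i < nu -> unit_vec 0 1 i <= v i.
    by rewrite /unit_vec; case: eqP => // ->; move: hlt; rewrite /bound eqxx.
  have hm := wsum_ge (nth 0 g) v hg0; move: hlt; rewrite /bound eqxx => hlt.
  case: hW => [|]; first by rewrite -hv; nia.
  apply; have -> : top - m = comb g (fun i => v i - unit_vec 0 1 i).
    by rewrite wsumB // wsum_unit // mul1n hv.
  exact: S_comb.
have hti : 1 <= t < nu by rewrite ht andbT lt0n.
move: hlt; rewrite /bound (negPf t0); set c := (gam t).+1 => hlt.
have lec i : i < nu -> unit_vec t c i <= v i by rewrite /unit_vec; case: eqP => // ->.
have e : top = c * G t + comb g (fun i => v i - unit_vec t c i).
  rewrite wsumB // wsum_unit // hv subnKC // -hv.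
  by apply: leq_trans (wsum_ge _ v ht); rewrite leq_mul2r hlt orbT.
have hap : Ap (c * G t).
  apply: (apery_summand hS hg top_apery e); last exact: S_comb.
  by rewrite -(wsum_unit (nth 0 g) c ht); exact: S_comb.
have [rho [hr1 hr2 hr3]] := gamma_next hti hap.
exists (fun i => v i - unit_vec t c i + rho i); split.
  rewrite wsumD wsumB // hr1 wsum_unit // hv subnK // -hv.
  by rewrite -(wsum_unit (nth 0 g) c ht); apply: leq_wsum.
have := exchange_gain hti hr1 hr2 hr3; rewrite -/c.
have := wsum_ge (fun i => big_weight + G i ^ 2) v ht.
have : c * (big_weight + G t ^ 2) <= v t * (big_weight + G t ^ 2).
  by rewrite leq_mul2r hlt orbT.
rewrite /potential wsumD wsumB // wsum_unit //; lia.
Qed.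

Lemma potential_le_bound v : comb g v = top ->
  potential v <= top * \sum_(i < nu) (big_weight + G i ^ 2).
Proof.
move=> hv; rewrite /potential /wsum big_distrr; apply: leq_sum => i _.
by rewrite leq_mul2r -hv (coord_le_comb hg) ?orbT.
Qed.

Lemma potential_max v : comb g v = top -> potential v <= potential bound.
Proof.
move=> hv; pose U := top * \sum_(i < nu) (big_weight + G i ^ 2).
move: {2}(U - potential v) (erefl (U - potential v)) => k.
elim/ltn_ind: k v hv => k IH v hv ek.
case: (classic (exists2 t, t < nu & bound t < v t)) => h.
  have [v' [hv' hlt]] := exchange_step hv h.
  have := potential_le_bound hv'; have := potential_le_bound hv => h1 h2.
  by apply: leq_trans (ltnW hlt) _; apply: (IH (U - potential v')) => //; lia.
have hle t : t < nu -> v t <= bound t.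
  by move=> ht; apply: NNPP => hn; apply: h; exists t; lia.
have : comb g (fun i => bound i - v i) = 0 by rewrite wsumB // hv subnn.
move/(comb_eq0 hg) => h0; rewrite leq_eqVlt; apply/orP; left; apply/eqP.
by apply: eq_wsum => i hi; have := h0 i hi; have := hle i hi; lia.
Qed.

Lemma box_inj l u : in_box l -> in_box u -> comb g l = comb g u ->
  forall t, t < nu -> l t = u t.
Proof.
move=> hl hu e.
pose swap (a b : nat -> nat) i := bound i - a i + b i.
have swap_top a b : in_box a -> comb g a = comb g b -> comb g (swap a b) = top.
  move=> ha eab; rewrite wsumD wsumB // -eab subnK //; exact: leq_wsum.
have side a b : in_box a -> in_box b -> comb g a = comb g b ->
    potential (swap a b) = potential bound -> forall t, t < nu -> b t <= a t.
  move=> ha hb eab hpot t ht; apply: NNPP => hn.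
  have out : exists2 t, t < nu & bound t < swap a b t.
    by exists t => //; have := ha t ht; rewrite /swap; lia.
  have [v' [hv' hlt]] := exchange_step (swap_top a b ha eab) out.
  by have := potential_max hv'; rewrite -hpot; lia.
have p1 := potential_max (swap_top l u hl e).
have p2 := potential_max (swap_top u l hu (esym e)).
have p12 : potential (swap l u) + potential (swap u l) = potential bound + potential bound.
  rewrite /potential -!wsumD; apply: eq_wsum => i hi.
  by have := hl i hi; have := hu i hi; rewrite /swap; lia.
move=> t ht; apply/eqP; rewrite eqn_leq.
by rewrite (side u l hu hl (esym e) ltac:(lia) t ht) (side l u hl hu e ltac:(lia) t ht).
Qed.

Lemma box_inj_mod l u : in_box l -> in_box u -> comb g l = comb g u %[mod m] ->
  forall t, t < nu -> l t = u t.
Proof.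
move=> hl hu e; apply: box_inj => //.
by apply: (apery_mod_inj hS hg) => //; exact: box_apery.
Qed.

Definition in_face L v := in_box v /\ supported g L v.
Definition face_residue L x := exists v, in_face L v /\ x = comb g v %[mod m].

Definition face_closed L := forall c, supported g L c -> face_residue L (comb g c).

Definition extends_face L i :=
  exists a k, in_face L k /\ (gam i).+1 * G i = a * m + comb g k.

Lemma in_face0 L : in_face L (fun _ => 0). Proof. by []. Qed.

Lemma face_residue0 L : face_residue L 0.
Proof. by exists (fun _ => 0); rewrite wsum0. Qed.

Lemma face_residue_mod L x y : face_residue L x -> x = y %[mod m] -> face_residue L y.
Proof. by case=> v [hv e] e2; exists v; split=> //; rewrite -e2. Qed.

Lemma face_residueD L x y : face_closed L ->
  face_residue L x -> face_residue L y -> face_residue L (x + y).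
Proof.
move=> hC [vx [[_ sx] ex]] [vy [[_ sy] ey]].
have : supported g L (fun i => vx i + vy i) by move=> t ht hn; rewrite sx // sy.
move/hC; rewrite wsumD => h; apply: (face_residue_mod h).
by rewrite -modnDm -ex -ey modnDm.
Qed.

Lemma face_residue_sub L L' x : {subset L <= L'} ->
  face_residue L x -> face_residue L' x.
Proof.
move=> hs [v [[hb hsu] e]]; exists v; split=> //; split=> // t ht hn.
by apply: hsu => //; apply/negP => /hs; exact/negP.
Qed.

Lemma face_closed_gen L :
  (forall v, in_face L v -> forall t, t \in L -> t < nu ->
     face_residue L (comb g v + G t)) -> face_closed L.
Proof.
move=> hclo c; move: {2}(vlen g c) (leqnn (vlen g c)) => n.
elim: n c => [|n IH] c hl hc.
  by rewrite wsum_eq0; [exact: face_residue0 | apply: vlen_eq0; lia].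
case: (classic (exists2 t, t < nu & 0 < c t)) => [[t ht hct]|hn]; last first.
  rewrite wsum_eq0; first exact: face_residue0.
  by move=> i hi; apply: NNPP => hh; apply: hn; exists i; lia.
have tL : t \in L by apply: NNPP => /negP hn; have := hc t ht hn; lia.
pose c' i := c i - unit_vec t 1 i.
have le1 i : i < nu -> unit_vec t 1 i <= c i by rewrite /unit_vec; case: eqP => // ->.
have hl' : vlen g c' <= n by rewrite /c' wsumB // vlen_unit //; lia.
have [v [hv e]] := IH c' hl' (fun i hi hiL => ltac:(by rewrite /c' hc)).
have -> : comb g c = comb g c' + G t.
  rewrite /c' wsumB // wsum_unit // mul1n subnK //.
  by apply: leq_trans (wsum_ge _ c ht); rewrite leq_pmull.
by apply: (face_residue_mod (hclo v hv t tL ht)); rewrite -modnDml -e modnDml.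
Qed.

(* The face of [:: 0] is trivially closed: multiples of m are 0 mod m. *)
Lemma face_closed_base : face_closed [:: 0].
Proof.
move=> c hc; exists (fun _ => 0); split; first exact: in_face0.
rewrite wsum0 comb_split big_nat_cond big1 ?addn0 ?modnMl ?mod0n //.
move=> i /andP[/andP[h1 h2] _].
by rewrite hc // ?mul0n // inE; case: eqP => //; lia.
Qed.

Lemma face_closed_rcons L i : face_closed L -> 1 <= i < nu -> i \notin L ->
  extends_face L i -> face_closed (rcons L i).
Proof.
move=> hC hi iL [a [k [[kb ks] ek]]].
have hi' : i < nu by case/andP: hi.
have i0 : i != 0 by case/andP: hi; rewrite lt0n.
have sub : {subset L <= rcons L i} by move=> x xL; rewrite mem_rcons inE xL orbT.
have notin_L x : x \notin rcons L i -> x \notin L.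
  by apply: contra; rewrite mem_rcons inE => ->; rewrite orbT.
apply: face_closed_gen => v [vb vs] t tL ht.
pose vL x := if x == i then 0 else v x.
have vLs : supported g L vL.
  move=> x hx hxL; rewrite /vL; case: eqP => // /eqP ne.
  by apply: vs => //; rewrite mem_rcons inE negb_or ne.
have ev_v : comb g v = comb g vL + v i * G i.
  rewrite -(wsum_unit (nth 0 g) (v i) hi') -wsumD; apply: eq_wsum => x hx.
  by rewrite /vL /unit_vec; case: eqP => [->|]; lia.
have new_face w c : in_face L w -> c <= bound i ->
    in_face (rcons L i) (fun x => w x + unit_vec i c x).
  case=> wb ws hc; split=> x hx; rewrite /unit_vec; case: eqP => [->|_].
  - by rewrite ws ?add0n // iL.
  - by rewrite addn0 wb.
  - by rewrite mem_rcons mem_head.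
  - by move=> /notin_L; rewrite addn0; exact: ws.
have vL_face : in_face L vL.
  by split=> // x hx; rewrite /vL; case: eqP => // _; exact: vb.
case: (eqVneq t i) => [->|nti].
  case: (ltnP (v i) (bound i)) => hvi.
    (* room left in coordinate i *)
    exists (fun x => vL x + unit_vec i (v i).+1 x); split; first exact: new_face.
    by rewrite wsumD wsum_unit // ev_v mulSn; congr (_ %% _); lia.
  (* coordinate i is full: use (gamma_i + 1) g_i = a m + comb k *)
  have vi : v i = gam i by have := vb i hi'; move: hvi; rewrite /bound (negPf i0); lia.
  have cs : supported g L (fun x => vL x + k x).
    by move=> x hx hxL /=; rewrite (ks x hx hxL) addn0; apply: vLs.
  apply: (face_residue_sub sub); apply: (face_residue_mod (hC _ cs)).
  by rewrite wsumD ev_v vi -addnA -mulSnr ek addnCA modnMDl.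
(* another generator of L: closedness of L absorbs it *)
have tL' : t \in L by move: tL; rewrite mem_rcons inE (negPf nti).
have cs : supported g L (fun x => vL x + unit_vec t 1 x).
  move=> x hx hxL; rewrite vLs // /unit_vec; case: eqP => // ext.
  by move: hxL; rewrite ext tL'.
have [w [wf ew]] := hC _ cs.
exists (fun x => w x + unit_vec i (v i) x); split.
  by apply: new_face => //; exact: vb.
rewrite wsumD wsum_unit // ev_v addnAC -modnDml.
by move: ew; rewrite wsumD wsum_unit // mul1n => ->; rewrite modnDml.
Qed.

Lemma face_residue_dvd L : face_closed L ->
  exists2 d, d %| m & forall x, face_residue L x <-> d %| x.
Proof.
move=> hC; have m0 : 0 < m := mult_pos hS hg.
have Hm : face_residue L m by apply: (face_residue_mod (face_residue0 L)); rewrite modnn mod0n.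
have Hmul q x : face_residue L x -> face_residue L (q * x).
  move=> hx; elim: q => [|q IH]; first by rewrite mul0n; exact: face_residue0.
  by rewrite mulSn; apply: face_residueD.
have [d [[d0 Hd] dmin]] := least_witness (ex_intro (fun d => 0 < d /\ face_residue L d) m (conj m0 Hm)).
suff Hdiv x : face_residue L x <-> d %| x by exists d => //; apply/Hdiv.
split; last by case/dvdnP=> q ->; exact: Hmul.
(* x %% d is represented too, since x + (x %/ d * d) * (m - 1) = x %% d mod m *)
move=> hx; have hq : face_residue L (x + (x %/ d * d) * (m - 1)).
  by apply: face_residueD => //; rewrite mulnC; apply/Hmul/Hmul.
have hr : face_residue L (x %% d).
  apply: (face_residue_mod hq); rewrite {1}(divn_eq x d).
  have -> : x %/ d * d + x %% d + x %/ d * d * (m - 1) = x %% d + (x %/ d * d) * m.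
    by rewrite [in RHS](_ : m = (m - 1).+1); [rewrite mulnS; lia | lia].
  by rewrite addnC modnMDl.
case: (posnP (x %% d)) => [/eqP|hpos]; first by rewrite -/(dvdn d x).
by exfalso; apply: (dmin _ (ltn_pmod x d0)); split.
Qed.

(* Specialization of Lemma box_residues_divisor to the box: by apery_residue
   and box_inj_mod, the box values hit each residue modulo m exactly once. *)
Lemma box_divisor d : 1 < d -> d %| m ->
  exists2 i, i < nu & ~~ (d %| G i) /\ d %| (bound i).+1 * G i.
Proof.
move=> d1 dm; have m0 : 0 < m := mult_pos hS hg.
pose N := top.+1.
pose c i := if i < nu then bound i else 0.
have cN i : c i < N.
  rewrite /c; case: ifP => // hi; rewrite ltnS.
  by apply: leq_trans (wsum_ge _ bound hi); rewrite leq_pmulr // (gen_pos hg hi).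
pose fv (f : {ffun 'I_nu -> 'I_N}) (i : nat) :=
  if insub i is Some k then nat_of_ord (f k) else 0.
have fvE f (k : 'I_nu) : fv f k = f k by rewrite /fv valK.
have valfv f : comb g (fv f) = \sum_(i < nu) f i * G i.
  by apply: eq_bigr => i _; rewrite fvE.
have fvB f : f \in family (fun i : 'I_nu => [pred j : 'I_N | j <= c i]) -> in_box (fv f).
  move=> /familyP hf i hi; have := hf (Ordinal hi).
  by rewrite inE /c /= hi -(fvE f (Ordinal hi)).
have [i [hi1 hi2]] : exists i : 'I_nu, ~~ (d %| G i) /\ (d %| (c i).+1 * G i).
  apply: (box_residues_divisor d1 dm m0 cN).
    move=> r; have [w [wa wr]] := apery_residue hS hg r.
    have [v [vb ew]] := apery_box wa; rewrite ew in wr.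
    have hlt (i : 'I_nu) : v i < N.
      by apply: leq_ltn_trans (cN i); rewrite /c ltn_ord; exact: vb.
    exists [ffun i => Ordinal (hlt i)]; split.
      by apply/familyP => i; rewrite inE ffunE /= /c ltn_ord vb.
    have -> : \sum_(i < nu) [ffun i => Ordinal (hlt i)] i * G i = comb g v.
      by apply: eq_bigr => i _; rewrite ffunE.
    by rewrite wr modn_small.
  move=> f1 f2 h1 h2 e; apply/ffunP => k; apply: val_inj.
  have e' : comb g (fv f1) = comb g (fv f2) %[mod m] by rewrite !valfv.
  by have := box_inj_mod (fvB _ h1) (fvB _ h2) e' (ltn_ord k); rewrite !fvE.
by exists i => //; move: hi2; rewrite /c ltn_ord.
Qed.

Lemma extends_face_exists L : face_closed L -> (forall t, t \in L -> t < nu) ->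
  (exists2 j, 1 <= j < nu & j \notin L) ->
  exists i, [/\ 1 <= i < nu, i \notin L & extends_face L i].
Proof.
move=> hC hL [j hj jL]; have hj' : j < nu by case/andP: hj.
have [d dm Hdiv] := face_residue_dvd hC.
have d_gens t : t \in L -> d %| G t.
  move=> tL; apply/Hdiv; have ht := hL t tL.
  rewrite -(mul1n (G t)) -(wsum_unit (nth 0 g) 1 ht); apply: hC => x hx hxL.
  by rewrite /unit_vec; case: eqP => // e; move: hxL; rewrite e tL.
(* d > 1: otherwise g_j would be congruent to a value of the face of L, which
   by box_inj_mod and comb_gen would contain e_j although j is not in L *)
have d1 : 1 < d.
  case: (ltnP 1 d) => // hd; exfalso.
  have d_1 : d = 1 by have := dvdn_gt0 (mult_pos hS hg) dm; lia.
  have [v [[vb vs] econg]] : face_residue L (G j) by apply/Hdiv; rewrite d_1 dvd1n.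
  have [w [wb ew]] := apery_box (gen_apery hS hg hj).
  have := box_inj_mod wb vb; rewrite -ew => /(_ econg j hj').
  by rewrite (comb_gen hS hg hj' (esym ew) hj') vs // /unit_vec eqxx.
have [i hi [hi1 hi2]] := box_divisor d1 dm.
have iL : i \notin L by apply: contra hi1; exact: d_gens.
have i0 : i != 0 by apply: contraNneq hi1 => ->.
have gi : bound i = gam i by rewrite /bound (negPf i0).
exists i; split=> //; first by rewrite hi andbT lt0n.
rewrite gi in hi2; have [v [[vb vs] econg]] := (Hdiv _).2 hi2.
have Ss : S ((gam i).+1 * G i) by rewrite -(wsum_unit (nth 0 g) _ hi); exact: S_comb.
have [a [w [wa ew]]] := apery_decomp hS hg Ss.
exists a, v; split=> //; rewrite ew; congr (_ + _).
apply: (apery_mod_inj hS hg) => //; first exact: box_apery.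
by move: econg; rewrite ew modnMDl.
Qed.

Lemma face_chain k : k <= nu.-1 -> exists ord : seq nat,
  [/\ size ord = k, uniq (0 :: ord), (forall t, t \in ord -> 1 <= t < nu),
      (forall p, p < k -> extends_face (0 :: take p ord) (nth 0 ord p) /\
                          face_closed (0 :: take p ord))
    & face_closed (0 :: ord)].
Proof.
elim: k => [|k IH] hk; first by exists [::]; split=> //; exact: face_closed_base.
have [ord [hs hu hin hgood hcl]] := IH (ltnW hk).
have hj : exists2 j, 1 <= j < nu & j \notin 0 :: ord.
  apply: NNPP => hn.
  have sub : {subset iota 1 nu.-1 <= ord}.
    move=> t; rewrite mem_iota => ht; apply: NNPP => /negP tn; apply: hn.
    exists t; first by move: ht; clear; lia.
    by rewrite inE negb_or tn andbT; apply/eqP; move: ht; clear; lia.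
  by have := uniq_leq_size (iota_uniq 1 nu.-1) sub; rewrite size_iota hs; move: hk; clear; lia.
have hL t : t \in 0 :: ord -> t < nu.
  by rewrite inE => /orP[/eqP ->|/hin /andP[]].
have [i [hi iL hgi]] := extends_face_exists hcl hL hj.
exists (rcons ord i); split.
- by rewrite size_rcons hs.
- by rewrite -rcons_cons rcons_uniq iL hu.
- by move=> t; rewrite mem_rcons inE => /orP[/eqP ->|/hin].
- move=> p hp; rewrite -cats1 takel_cat; last by rewrite hs; move: hp; clear; lia.
  rewrite nth_cat hs; case: (ltnP p k) => hpk; first exact: hgood.
  have -> : p = k by move: hp hpk; clear; lia.
  by rewrite -hs take_size subnn.
- by rewrite -rcons_cons; apply: face_closed_rcons.
Qed.

Lemma chain_phi ord p : uniq (0 :: ord) -> (forall t, t \in ord -> 1 <= t < nu) ->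
  p < size ord -> extends_face (0 :: take p ord) (nth 0 ord p) ->
  face_closed (0 :: take p ord) ->
  is_phi (map (nth 0 g) (0 :: ord)) p.+1 (gam (nth 0 ord p)).
Proof.
move=> hu hin hp [a [k [[kb ks] ek]]] hclp.
set i := nth 0 ord p; set L := 0 :: take p ord.
have hi : 1 <= i < nu by apply/hin/mem_nth.
have hi' : i < nu by case/andP: hi.
have hL t : t \in L -> t < nu by rewrite inE => /orP[/eqP ->|/mem_take /hin /andP[]].
rewrite /is_phi -map_take /= (nth_map 0) //= -/i.
split.
  apply/(in_monoid_supported _ hL); exists (fun t => k t + unit_vec 0 a t); split.
    move=> t ht; rewrite inE negb_or => /andP[t0 tT]; rewrite ks ?inE ?negb_or ?t0 //.
    by rewrite /unit_vec (negPf t0).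
  by rewrite wsumD wsum_unit // addnC.
move=> h h0 /(in_monoid_supported _ hL) [c [hc ec]].
case: (leqP (gam i).+1 h) => // hlt; exfalso.
have [v [[vb vs] econg]] := hclp c hc.
have i0 : i != 0 by apply/eqP => e; rewrite e in hi.
have eb : in_box (unit_vec i h).
  move=> t ht; rewrite /unit_vec /bound; case: eqP => [->|]; last by case: eqP.
  by rewrite (negPf i0); lia.
have := box_inj_mod eb vb; rewrite wsum_unit // ec => /(_ econg i hi').
rewrite vs //; first by rewrite /unit_vec eqxx; lia.
rewrite inE negb_or i0 /=; apply: nth_notin_take => //; by case/andP: hu.
Qed.

(* Ordering the generators as m followed by the indices appended along a
   maximal chain of closed faces exhibits S as free, with phi_i = gamma_i. *)
Lemma rectangular_free : free S g.
Proof.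
have [ord [hs hu hin hgood _]] := face_chain (leqnn nu.-1).
have uo : uniq ord by case/andP: hu.
have pord : perm_eq ord (iota 1 nu.-1).
  have sub : {subset ord <= iota 1 nu.-1}.
    by move=> t /hin; rewrite mem_iota; lia.
  have [_ eq_mem] := uniq_min_size uo sub ltac:(by rewrite size_iota hs).
  by apply: uniq_perm => //; exact: iota_uniq.
have ordmem i : 1 <= i < nu -> i \in ord.
  by move=> hi; rewrite (perm_mem pord) mem_iota; lia.
set n := map (nth 0 g) (0 :: ord).
have sn : size n = nu by rewrite size_map /= hs; lia.
have nthn j : 0 < j < nu -> nth 0 n j = G (nth 0 ord j.-1).
  by case: j => // j hj; rewrite (nth_map 0) //= hs; lia.
have reidx (F : nat -> nat) :
    \sum_(1 <= j < nu) F (nth 0 ord j.-1) = \sum_(1 <= i < nu) F i.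
  have -> : \sum_(1 <= i < nu) F i = \sum_(i <- ord) F i.
    by rewrite (perm_big _ pord) /index_iota subn1.
  by rewrite [RHS](big_nth 0) big_add1 hs.
exists n; split.
  rewrite -[X in perm_eq _ X](mkseq_nth 0 g) /mkseq; apply: perm_map.
  have -> : iota 0 nu = 0 :: iota 1 nu.-1 by rewrite -{1}(prednK hg0).
  by rewrite perm_cons.
exists (fun j => gam (nth 0 ord j.-1)); split.
  move=> j; rewrite sn; case: j => // p /andP[_ hp] /=.
  have hp' : p < nu.-1 by lia.
  by have [hgd hcl] := hgood p hp'; apply: chain_phi; rewrite ?hs.
move=> x; rewrite sn /=; split.
  case/hAp=> lam' [hb ->]; exists (fun j => lam' (nth 0 ord j.-1)); split.
    by move=> j hj; apply/hb/hin/mem_nth; rewrite hs; lia.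
  rewrite -(reidx (fun i => lam' i * G i)).
  by apply: eq_big_nat => j hj; rewrite nthn.
case=> lam [hb ->]; apply/hAp.
exists (fun i => lam (index i ord).+1); split.
  move=> i hi; have io := ordmem i hi; move: (io); rewrite -index_mem => hidx.
  by have := hb (index i ord).+1; rewrite /= nth_index //; apply; rewrite hs in hidx; lia.
rewrite -(reidx (fun i => lam (index i ord).+1 * G i)).
apply: eq_big_nat => j hj; rewrite nthn // index_uniq //; first by case: j hj.
rewrite hs; lia.
Qed.

(* Each gamma_i is positive: g_i lies in Ap(S) and its only representation
   is e_i, which therefore lies in the box. *)
Lemma gamma_pos j : 1 <= j < nu -> 1 <= gam j.
Proof.
move=> hj; have hj' : j < nu by case/andP: hj.
have [v [vb econg]] := apery_box (gen_apery hS hg hj).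
have := vb j hj'; rewrite (comb_gen hS hg hj' (esym econg) hj') /unit_vec eqxx /bound.
by case: eqP => // e; move: hj; rewrite e.
Qed.

End GammaRectangular.

Theorem gamma_rectangular_free S g : numerical_semigroup S -> min_gens S g ->
  gamma_rectangular S g -> free S g.
Proof. by move=> hS hg [gam [hgam hAp]]; exact: rectangular_free hAp. Qed.

Lemma S569_numerical : numerical_semigroup S569.
Proof.
split.
- by exists 0, 0, 0.
- move=> x y [a [b [c ->]]] [a' [b' [c' ->]]].
  by exists (a + a'), (b + b'), (c + c'); lia.
- exists 14 => n; elim/ltn_ind: n => n IH hn.
  case: (ltnP n 19) => h.
    have : n \in [:: 14; 15; 16; 17; 18] by rewrite !inE; lia.
    rewrite !inE => /orP[/eqP->|/orP[/eqP->|/orP[/eqP->|/orP[/eqP->|/eqP->]]]].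
    + by exists 1, 0, 1.
    + by exists 3, 0, 0.
    + by exists 2, 1, 0.
    + by exists 1, 2, 0.
    + by exists 0, 3, 0.
  have [a [b [c e]]] := IH (n - 5) ltac:(lia) ltac:(lia).
  by exists a.+1, b, c; lia.
Qed.

(* Each of 5, 6, 9 is indecomposable, and every other nonzero element has one
   of them as a proper summand. *)
Lemma S569_min_gens : min_gens S569 [:: 5; 6; 9].
Proof.
split=> // x; split.
  rewrite !inE => /orP[/eqP->|/orP[/eqP->|/eqP->]]; split=> //.
  - by exists 1, 0, 0.
  - by move=> [a [b [[a1 [a2 [a3 ->]]] [b1 [b2 [b3 ->]]] ? ? ?]]]; lia.
  - by exists 0, 1, 0.
  - by move=> [a [b [[a1 [a2 [a3 ->]]] [b1 [b2 [b3 ->]]] ? ? ?]]]; lia.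
  - by exists 0, 0, 1.
  - by move=> [a [b [[a1 [a2 [a3 ->]]] [b1 [b2 [b3 ->]]] ? ? ?]]]; lia.
case=> [[a [b [c e]]] x0 nd]; rewrite !inE.
case: (posnP a) => ha.
  case: (posnP b) => hb.
    case: (posnP c) => hc; first by lia.
    case: (eqVneq x 9) => [->|nx]; first by [].
    exfalso; apply: nd; exists 9, (x - 9); split; [by exists 0, 0, 1 | | by [] | lia | lia].
    by exists 0, 0, c.-1; lia.
  case: (eqVneq x 6) => [->|nx]; first by [].
  exfalso; apply: nd; exists 6, (x - 6); split; [by exists 0, 1, 0 | | by [] | lia | lia].
  by exists 0, b.-1, c; lia.
case: (eqVneq x 5) => [->|nx]; first by [].
exfalso; apply: nd; exists 5, (x - 5); split; [by exists 1, 0, 0 | | by [] | lia | lia].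
by exists a.-1, b, c; lia.
Qed.

(* With the ordering (6, 9, 5): phi = (1, 2) and Ap(S, 6) = {0, 9, 5, 14, 10, 19}. *)
Lemma S569_free : free S569 [:: 5; 6; 9].
Proof.
exists [:: 6; 9; 5]; split; first by [].
exists (fun j => if j == 1 then 1 else 2); split.
  move=> i /andP[h1 h2]; rewrite /= in h2; have : i \in [:: 1; 2] by rewrite !inE; lia.
  rewrite !inE => /orP[/eqP->|/eqP->]; split.
  - by exists (fun _ => 3); rewrite big_ord_recl big_ord0.
  - by move=> h h0 [l]; rewrite big_ord_recl big_ord0 /= => e; lia.
  - by exists (fun _ => 1); rewrite !big_ord_recl big_ord0.
  - by move=> h h0 [l]; rewrite !big_ord_recl big_ord0 /= => e; lia.
move=> x; split.
  case=> [[a [b [c e]]] hx]; rewrite /= in hx.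
  have hb : b = 0.
    case: (posnP b) => // hb; exfalso; case: hx => [|]; first lia.
    by apply; exists a, b.-1, c; lia.
  have hc : c <= 1.
    case: (leqP c 1) => // hc; exfalso; case: hx => [|]; first lia.
    by apply; exists a, (b + 2), (c - 2); lia.
  have ha : a <= 2.
    case: (leqP a 2) => // ha; exfalso; case: hx => [|]; first lia.
    by apply; exists (a - 3), b, (c + 1); lia.
  exists (fun j => if j == 1 then c else a); split.
    move=> i /andP[h1 h2]; rewrite /= in h2; have : i \in [:: 1; 2] by rewrite !inE; lia.
    by rewrite !inE => /orP[/eqP->|/eqP->].
  by rewrite big_ltn // big_ltn // big_geq //=; lia.
case=> lam [hl ->]; rewrite big_ltn // big_ltn // big_geq //=.
have h1 := hl 1 isT; have h2 := hl 2 isT; rewrite /= in h1 h2.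
split; first by exists (lam 2), 0, (lam 1); lia.
case: (ltnP (lam 1 * 9 + (lam 2 * 5 + 0)) 6) => hx; [by left | right].
by case=> a [b [c e]]; lia.
Qed.

(* If Ap(S) were gamma-rectangular, gamma_1, gamma_2 >= 1 would put
   6 + 9 = 15 in Ap(S), but 15 - 5 = 10 lies in S. *)
Lemma S569_not_rectangular : ~ gamma_rectangular S569 [:: 5; 6; 9].
Proof.
case=> gam [_ hAp].
have g1 := gamma_pos S569_numerical S569_min_gens hAp (j := 1) isT.
have g2 := gamma_pos S569_numerical S569_min_gens hAp (j := 2) isT.
have : apery S569 5 15.
  apply/hAp; exists (fun _ => 1); split; last by rewrite big_ltn // big_ltn // big_geq.
  move=> i /andP[h1 h2]; rewrite /= in h2; have : i \in [:: 1; 2] by rewrite !inE; lia.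
  by rewrite !inE => /orP[/eqP->|/eqP->].
by case=> _ [//|]; apply; exists 2, 0, 0.
Qed.

Theorem mainTheorem8 :
  (forall (S : nat -> Prop) (g : seq nat),
      numerical_semigroup S -> min_gens S g ->
      gamma_rectangular S g -> free S g) /\
  [/\ numerical_semigroup S569, min_gens S569 [:: 5; 6; 9],
      free S569 [:: 5; 6; 9] & ~ gamma_rectangular S569 [:: 5; 6; 9]].
Proof.
split; first exact: gamma_rectangular_free.
by split; [exact: S569_numerical | exact: S569_min_gens | exact: S569_free
          | exact: S569_not_rectangular].
Qed.
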